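(* Let $G=(U,V,E)$ be a path restricted ordered bipartite graph and let $v$ be any vertex of $G$. Let $T_r(v)$ be the subgraph formed by the union of all forward paths starting at $v$ whose vertices decrease in order (i.e., read from $v$, the $U$-vertices strictly decrease and the $V$-vertices strictly decrease). Then the subgraph of $G$ induced by the vertex set of $T_r(v)$ has exactly $N-1$ edges, where $N$ is the number of vertices of $T_r(v)$; i.e., this induced subgraph coincides with $T_r(v)$ and is a tree.
   Context: An ordered bipartite graph $G=(U,V,E)$ consists of disjoint finite sets $U,V$, each totally ordered, and $E\subseteq U\times V$. A forward path is a sequence $w_0,\dots,w_m$ of distinct vertices alternating between $U$ and $V$, consecutive ones adjacent, such that the $U$-vertices appear in strictly increasing order and the $V$-vertices appear in strictly increasing order along the sequence (or, read in reverse, both strictly decreasing). A back edge to a forward path $w_0,\dots,w_m$ (written in increasing direction) is an edge $\{w_0,x\}\in E$ with $x$ in the part not containing $w_0$ and $w_1<x\le M$, where $M$ is the largest vertex of the path in that part. $G$ is a path restricted ordered bipartite graph if no forward path has a back edge. *)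

From mathcomp Require Import all_boot.
Set Implicit Arguments. Unset Strict Implicit. Unset Printing Implicit Defensive.

(* An ordered bipartite graph: U = 'I_m, V = 'I_n (with their natural orders,
   every finite totally ordered set being order-isomorphic to an ordinal),
   E : 'I_m -> 'I_n -> bool the edge relation E ⊆ U × V. *)
Section OBG.
Variables (m n : nat) (E : 'I_m -> 'I_n -> bool).

Definition vtx := ('I_m + 'I_n)%type.

Definition adj (x y : vtx) : bool :=
  match x, y with
  | inl u, inr w => E u w
  | inr w, inl u => E u w
  | _, _ => false
  end.

Definition getU (x : vtx) : option 'I_m := if x is inl u then Some u else None.
Definition getV (x : vtx) : option 'I_n := if x is inr w then Some w else None.

Definition incr_fpath (p : seq vtx) : bool :=
  match p with
  | [::] => false
  | w0 :: s =>
    [&& path adj w0 s, uniq p,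
        sorted ltn (map (@nat_of_ord m) (pmap getU p)) &
        sorted ltn (map (@nat_of_ord n) (pmap getV p))]
  end.

Definition fpath (p : seq vtx) : bool := incr_fpath p || incr_fpath (rev p).

Definition has_back_edge (p : seq vtx) : Prop :=
  match p with
  | inl u :: inr b :: _ =>
      exists c : 'I_n, [/\ E u c, b < c & c <= \max_(w <- pmap getV p) (w : nat)]
  | inr b :: inl a :: _ =>
      exists c : 'I_m, [/\ E c b, a < c & c <= \max_(u <- pmap getU p) (u : nat)]
  | _ => False
  end.

Definition path_restricted : Prop :=
  forall p : seq vtx, incr_fpath p -> ~ has_back_edge p.

Definition dec_fpath (v : vtx) (s : seq vtx) : bool := incr_fpath (rev (v :: s)).

Definition in_Tr (v x : vtx) : Prop :=
  exists s : seq vtx, dec_fpath v s /\ x \in v :: s.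

Definition induced_edges (S : {set vtx}) : nat :=
  #|[set e : 'I_m * 'I_n | [&& E e.1 e.2, inl e.1 \in S & inr e.2 \in S]]|.

End OBG.

From mathcomp Require Import all_boot.
Set Implicit Arguments. Unset Strict Implicit. Unset Printing Implicit Defensive.

(* A vertex x <> v of T_r(v) has a parent: the vertex following x on an
   increasing forward path from x to v.  Path restriction pins the parent down
   as the largest neighbour of x in T_r(v): for a larger neighbour q, either q
   lies on the side of v and its own path to v contradicts the order, or that
   path enters v from a vertex d >= q which extends the path of x, and then
   {x, q} is a back edge.  So parents are unique, no two vertices are each
   other's parent, and every edge of the induced subgraph joins a vertex to its
   parent; sending each edge to its child endpoint is a bijection onto
   T_r(v) minus v. *)

Lemma pairwise_pmap (aT rT : Type) (f : aT -> option rT) (r : rel rT) s :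
  pairwise r (pmap f s) =
  pairwise [rel x y | oapp (fun a => oapp (r a) true (f y)) true (f x)] s.
Proof.
elim: s => //= x s IH; case fx: (f x) => [a|] /=; rewrite IH.
  by rewrite all_pmap; congr (_ && _); apply: eq_all => y /=; rewrite fx.
by rewrite (@eq_all _ _ predT) ?all_predT // => y /=; rewrite fx.
Qed.

Section Vertices.
Variables m n : nat.
Implicit Types x y z : vtx m n.

Definition inU x : bool := if x is inl _ then true else false.
Definition pos x : nat := match x with inl u => u | inr w => w end.

Definition prec x y : bool := (inU x == inU y) ==> (pos x < pos y).

Lemma vtx_inj x y : inU x = inU y -> pos x = pos y -> x = y.
Proof. by case: x y => [?|?] [?|?] //= _ /val_inj ->. Qed.

Lemma sorted_getU s :
  sorted ltn (map val (pmap (@getU m n) s)) =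
  pairwise [rel x y | inU x && inU y ==> (pos x < pos y)] s.
Proof.
rewrite sorted_pairwise; last exact: ltn_trans.
by rewrite pairwise_map pairwise_pmap; apply: eq_pairwise => -[?|?] [?|?].
Qed.

Lemma sorted_getV s :
  sorted ltn (map val (pmap (@getV m n) s)) =
  pairwise [rel x y | ~~ inU x && ~~ inU y ==> (pos x < pos y)] s.
Proof.
rewrite sorted_pairwise; last exact: ltn_trans.
by rewrite pairwise_map pairwise_pmap; apply: eq_pairwise => -[?|?] [?|?].
Qed.

Variable E : 'I_m -> 'I_n -> bool.

Lemma adjC x y : adj E x y = adj E y x.
Proof. by case: x y => [?|?] [?|?]. Qed.

Lemma inU_adj x y : adj E x y -> inU y = ~~ inU x.
Proof. by case: x y => [?|?] [?|?]. Qed.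

Lemma adj_neq x y : adj E x y -> x != y.
Proof. by case: x y => [?|?] [?|?]. Qed.

Lemma inU_adj2 x y z : adj E x y -> adj E x z -> inU y = inU z.
Proof. by move=> /inU_adj -> /inU_adj ->. Qed.

Definition incr_path x s := path (adj E) x s && pairwise prec (x :: s).

Lemma incr_fpath_cons x s : incr_fpath E (x :: s) = incr_path x s.
Proof.
rewrite /incr_fpath /incr_path sorted_getU sorted_getV uniq_pairwise -!pairwise_relI.
congr (_ && _); apply: (eq_pairwise _ (x :: s)) => -[a|a] [b|b]; rewrite /prec /= ?andbT //;
  by rewrite andb_idl // => lt_ab; apply: contraTneq lt_ab => -[->]; rewrite ltnn.
Qed.

Lemma incr_path_cons y x s :
  incr_path y (x :: s) = [&& adj E y x, all (prec y) (x :: s) & incr_path x s].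
Proof. by rewrite /incr_path /=; case: (adj E y x); case: (path _ x s); rewrite ?andbF. Qed.

Lemma incr_path_suffix x s1 y s2 : incr_path x (s1 ++ y :: s2) -> incr_path y s2.
Proof.
elim: s1 x => [|z s1 IH] x /=; rewrite incr_path_cons => /and3P [_ _] //; exact: IH.
Qed.

Lemma incr_path_prec x s y : incr_path x s -> y \in s -> prec x y.
Proof. by case/andP=> _; rewrite pairwise_cons => /andP [/allP prec_x _] /prec_x. Qed.

Lemma incr_path_head_min x s y :
  incr_path x s -> y \in x :: s -> inU y = inU x -> pos x <= pos y.
Proof.
move=> xs; rewrite inE => /predU1P [-> // | /(incr_path_prec xs)].
by rewrite /prec => /implyP lt_xy eq_xy; rewrite ltnW // lt_xy // eq_xy.
Qed.

Lemma incr_path_last_max x s y :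
  incr_path x s -> y \in x :: s -> inU y = inU (last x s) -> pos y <= pos (last x s).
Proof.
case/andP=> _; rewrite lastI pairwise_rcons mem_rcons => /andP [/allP prec_last _].
rewrite inE => /predU1P [-> // | /prec_last]; rewrite /prec => /implyP lt_y eq_y.
by rewrite ltnW // lt_y // eq_y.
Qed.

Lemma incr_path_rcons x s d :
  incr_path x s -> adj E (last x s) d ->
  (forall y, y \in x :: s -> inU y = inU d -> pos y < pos d) -> incr_path x (rcons s d).
Proof.
case/andP=> xs prec_s sd lt_d.
rewrite /incr_path rcons_path xs sd -rcons_cons pairwise_rcons prec_s !andbT.
by apply/allP => y /lt_d lt_yd; apply/implyP => /eqP /lt_yd.
Qed.

Lemma incr_path_cons_prec x s y :
  incr_path x s -> adj E y x ->
  (forall z, z \in x :: s -> inU z = inU y -> pos y < pos z) -> incr_path y (x :: s).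
Proof.
move=> xs yx gt_y; rewrite incr_path_cons yx xs andbT.
by apply/allP => z /gt_y lt_yz; apply/implyP => /eqP/esym/lt_yz.
Qed.

Definition reach v x := exists2 t, incr_path x t & last x t = v.

Lemma in_TrP v x : in_Tr E v x <-> reach v x.
Proof.
split=> [[s [dec_s x_in]] | [t xt last_t]].
  have [p1 [p2 def_p]] : exists p1 p2, rcons (rev s) v = p1 ++ x :: p2.
    have : x \in rcons (rev s) v by rewrite mem_rcons inE mem_rev -in_cons.
    by case/splitPr=> p1 p2; exists p1, p2.
  exists p2; last by have := congr1 (last x) def_p; rewrite last_rcons last_cat.
  move: dec_s; rewrite /dec_fpath rev_cons def_p.
  by case: p1 {def_p} => [|z p1]; rewrite incr_fpath_cons // => /incr_path_suffix.
exists (rev (belast x t)); split.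
  by rewrite /dec_fpath rev_cons revK -last_t -lastI incr_fpath_cons.
by case: t {xt} last_t => [|z t] /= <-; rewrite !inE ?mem_rev /= ?inE eqxx ?orbT.
Qed.

Definition parent v x y := exists2 t, incr_path x (y :: t) & last y t = v.

Lemma parent_adj v x y : parent v x y -> adj E x y.
Proof. by case=> t; rewrite incr_path_cons => /and3P []. Qed.

Lemma parent_reach v x y : parent v x y -> reach v y.
Proof. by case=> t; rewrite incr_path_cons => /and3P [_ _]; exists t. Qed.

Lemma parent_neq v x y : parent v x y -> x != v.
Proof.
case=> t xyt <-; apply: contraTneq (incr_path_prec xyt (mem_last y t)) => <-.
by rewrite /prec eqxx ltnn.
Qed.

Lemma reach_parent v x : reach v x -> x != v -> exists y, parent v x y.
Proof.
case=> -[|y t] xt last_t x_neq; first by rewrite -last_t eqxx in x_neq.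
by exists y, t.
Qed.

End Vertices.

Section PathRestricted.
Variables (m n : nat) (E : 'I_m -> 'I_n -> bool).
Hypothesis hPR : path_restricted E.
Variable v : vtx m n.
Implicit Types x y z w q : vtx m n.

(* Otherwise {z, q} is a back edge of z :: w :: t. *)
Lemma below_neighbour z w t q y :
  incr_path E z (w :: t) -> adj E z q -> inU q = inU w -> pos w < pos q ->
  y \in z :: w :: t -> inU y = inU w -> pos y < pos q.
Proof.
move=> zwt zq eq_qw lt_wq y_in eq_yw; rewrite ltnNge; apply/negP => le_qy.
have zw : adj E z w by move: zwt; rewrite incr_path_cons => /and3P [].
apply: (hPR (p := z :: w :: t)); first by rewrite incr_fpath_cons.
case: z w q y zw zq eq_qw lt_wq y_in eq_yw le_qy {zwt}
  => [u|u] [b|b] [c|c] [d|d] // zw zq _ lt_bc d_in _ le_cd.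
- exists c; split=> //; apply: leq_trans le_cd _; apply: leq_bigmax_seq => //.
  by rewrite mem_pmap; apply: (map_f (@getV m n) d_in).
- exists c; split=> //; apply: leq_trans le_cd _; apply: leq_bigmax_seq => //.
  by rewrite mem_pmap; apply: (map_f (@getU m n) d_in).
Qed.

Lemma parent_max z w q :
  parent E v z w -> reach E v q -> adj E z q -> inU q = inU w -> pos q <= pos w.
Proof.
case=> t zwt last_t [tq qt last_q] zq eq_qw; rewrite leqNgt; apply/negP => lt_wq.
have below := below_neighbour zwt zq eq_qw lt_wq.
have v_in : v \in z :: w :: t by rewrite -last_t inE mem_last orbT.
have [eq_qv | neq_qv] := eqVneq (inU q) (inU v).
  have := incr_path_last_max qt (mem_head q tq); rewrite last_q => /(_ eq_qv).
  by rewrite leqNgt below // -eq_qw.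
case/lastP: tq qt last_q => [|r d'] qt.
  by move=> /= def_q; rewrite def_q eqxx in neq_qv.
rewrite last_rcons => def_d'; subst d'; set d := last q r.
have dv : adj E d v by move: qt => /andP []; rewrite rcons_path => /andP [].
have eq_dq : inU d = inU q.
  by move: neq_qv; rewrite (inU_adj dv); case: (inU d); case: (inU q).
have le_qd : pos q <= pos d.
  by apply: (incr_path_head_min qt); rewrite // -rcons_cons mem_rcons inE mem_last orbT.
have zwtd : incr_path E z (w :: rcons t d).
  apply: (incr_path_rcons zwt); first by rewrite /= last_t adjC.
  by move=> y y_in eq_yd; apply: leq_trans (below y y_in _) le_qd; rewrite eq_yd eq_dq.
have d_in : d \in [:: z, w & rcons t d] by rewrite !inE mem_rcons inE eqxx !orbT.
have := below_neighbour zwtd zq eq_qw lt_wq d_in.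
by rewrite eq_dq ltnNge le_qd => /(_ eq_qw).
Qed.

Lemma parent_uniq x y1 y2 : parent E v x y1 -> parent E v x y2 -> y1 = y2.
Proof.
move=> xy1 xy2; have eq_y12 := inU_adj2 (parent_adj xy1) (parent_adj xy2).
apply: vtx_inj => //; apply/eqP; rewrite eqn_leq.
rewrite (parent_max xy2 (parent_reach xy1) (parent_adj xy1) eq_y12).
by rewrite (parent_max xy1 (parent_reach xy2) (parent_adj xy2) (esym eq_y12)).
Qed.

Lemma parent_asym x y : parent E v x y -> ~ parent E v y x.
Proof.
move=> xy [[|c t] yxt last_t]; first by move: (parent_neq xy); rewrite -last_t eqxx.
have xc : parent E v x c by exists t => //; move: yxt; rewrite incr_path_cons => /and3P [].
have := incr_path_prec yxt (_ : c \in x :: c :: t); rewrite !inE eqxx orbT.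
by rewrite (parent_uniq xc xy) /prec eqxx ltnn => /(_ isT).
Qed.

Lemma parent_total x y :
  reach E v x -> reach E v y -> adj E x y -> parent E v x y \/ parent E v y x.
Proof.
move=> vx vy xy; have [def_x | x_neq] := eqVneq x v.
  have y_neq : y != v by rewrite -def_x eq_sym (adj_neq xy).
  have [w yw] := reach_parent vy y_neq; have [t ywt last_t] := yw.
  right; suff <- : w = x by [].
  have eq_wx : inU w = inU x by rewrite adjC in xy; rewrite (inU_adj2 (parent_adj yw) xy).
  apply: vtx_inj => //; apply/eqP; rewrite eqn_leq (parent_max yw vx) 1?adjC ?andbT //.
  have w_in : w \in [:: y, w & t] by rewrite !inE eqxx orbT.
  by have := incr_path_last_max ywt w_in; rewrite /= last_t -def_x; apply.
have [p xp] := reach_parent vx x_neq.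
have eq_yp := inU_adj2 xy (parent_adj xp).
have [-> | neq_yp] := eqVneq y p; first by left.
have lt_yp : pos y < pos p.
  by rewrite ltn_neqAle (parent_max xp vy xy eq_yp) (contra_neq (vtx_inj eq_yp) neq_yp).
right; case: xp => t xpt last_t; exists (p :: t) => //.
have pt : incr_path E p t by move: xpt; rewrite incr_path_cons => /and3P [].
apply: incr_path_cons_prec xpt _ _; first by rewrite adjC.
move=> z; rewrite inE => /predU1P [-> eq_xy | z_in eq_zy].
  by move: (inU_adj xy); rewrite -eq_xy; case: (inU x).
by apply: leq_trans lt_yp (incr_path_head_min pt z_in _); rewrite eq_zy.
Qed.

Variable S : {set vtx m n}.
Hypothesis S_reach : forall x, x \in S <-> reach E v x.

Definition parentb x y :=
  (x != v) && [forall z, adj E x z && (z \in S) ==> (pos z <= pos y)].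

Lemma parentP x y :
  x \in S -> y \in S -> adj E x y -> reflect (parent E v x y) (parentb x y).
Proof.
move=> xS yS xy; apply: (iffP andP) => [[x_neq /forallP max_y] | xy_parent].
  have [p xp] := reach_parent ((S_reach x).1 xS) x_neq.
  have eq_yp := inU_adj2 xy (parent_adj xp).
  suff -> : y = p by [].
  apply: vtx_inj => //; apply/eqP.
  rewrite eqn_leq (parent_max xp ((S_reach y).1 yS) xy eq_yp).
  have pS : p \in S by apply/S_reach; apply: parent_reach xp.
  by have /implyP := max_y p; apply; rewrite (parent_adj xp) pS.
split; first exact: parent_neq xy_parent.
apply/forallP => z; apply/implyP => /andP [xz zS].
exact: parent_max xy_parent ((S_reach z).1 zS) xz (inU_adj2 xz xy).
Qed.

Definition inner_edges :=
  [set e : 'I_m * 'I_n | [&& E e.1 e.2, inl e.1 \in S & inr e.2 \in S]].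

Definition echild e : vtx m n := if parentb (inl e.1) (inr e.2) then inl e.1 else inr e.2.
Definition eparent e : vtx m n := if parentb (inl e.1) (inr e.2) then inr e.2 else inl e.1.

Lemma parent_echild e : e \in inner_edges -> parent E v (echild e) (eparent e).
Proof.
rewrite inE /echild /eparent => /and3P [e12 e1S e2S].
have e12' : adj E (inl e.1) (inr e.2) := e12.
case: (parentP e1S e2S e12') => // not_succ.
by have [] := parent_total ((S_reach _).1 e1S) ((S_reach _).1 e2S) e12'.
Qed.

Lemma echild_parent e x y :
  e \in inner_edges -> parent E v x y ->
  (x = inl e.1 /\ y = inr e.2) \/ (x = inr e.2 /\ y = inl e.1) -> echild e = x.
Proof.
move=> eA xy; have := parent_echild eA; rewrite /echild /eparent.
by case: ifP => _ yx [[? ?] | [? ?]]; subst x y => //; case: (parent_asym xy yx).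
Qed.

Lemma echild_inj : {in inner_edges &, injective echild}.
Proof.
move=> e1 e2 e1A e2A eq_echild.
have e2_parent := parent_echild e2A; rewrite -eq_echild in e2_parent.
have := parent_uniq (parent_echild e1A) e2_parent; move: eq_echild.
case: e1 e2 {e1A e2A e2_parent} => [a1 b1] [a2 b2]; rewrite /echild /eparent /=.
by do 2 case: ifP => _; move=> // [->] [->].
Qed.

Lemma echild_image : echild @: inner_edges = S :\ v.
Proof.
apply/setP => x; rewrite !inE; apply/imsetP/andP => [[e eA ->] | [x_neq xS]].
  split; first exact: parent_neq (parent_echild eA).
  by move: eA; rewrite inE /echild => /and3P [_ ? ?]; case: ifP.
have [y xy] := reach_parent ((S_reach x).1 xS) x_neq.
have yS : y \in S by apply/S_reach; apply: parent_reach xy.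
have := parent_adj xy; have := echild_parent _ xy.
case: x y xy xS yS {x_neq} => [a|b] [a'|b'] // _ xS yS echild_e xy.
  have eA : (a, b') \in inner_edges by rewrite inE; apply/and3P.
  by exists (a, b') => //; rewrite (echild_e _ eA) //; left.
have eA : (a', b) \in inner_edges by rewrite inE; apply/and3P.
by exists (a', b) => //; rewrite (echild_e _ eA) //; right.
Qed.

Lemma card_induced_edges : induced_edges E S = #|S| - 1.
Proof.
have vS : v \in S by apply/S_reach; exists [::].
rewrite -[LHS]/#|inner_edges| -(card_in_imset echild_inj) echild_image (cardsD1 v S) vS.
by rewrite add1n subn1.
Qed.

End PathRestricted.

Theorem lemma3p3 (m n : nat) (E : 'I_m -> 'I_n -> bool)
  (hPR : path_restricted E) (v : vtx m n) (S : {set vtx m n})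
  (hS : forall x, x \in S <-> in_Tr E v x) :
  induced_edges E S = #|S| - 1.
Proof.
apply: (card_induced_edges hPR) => x.
by split=> [/hS/in_TrP | /in_TrP/hS].
Qed.
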